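(* Let $\lambda\in\mathbb N$ be fixed and $p=\frac{\lambda+1}{\lambda}$. For every rational $\alpha\in(0,1]$, every profile $P$, every ranking $r$ that the $p$-geometric rule may output on $P$ (under any tie-breaking), and every group $N'$ that is $(\alpha,\lambda)$-significant in $P$, we have $\mathrm{avg}(N',r_{\le k})\ge\lambda$ where $k=\lceil\frac{e(\lambda+1)}{\alpha}\rceil$.
   Context: Let $N=[n]$ be a finite set of voters and $A$ a finite set of $m$ alternatives; a profile $P=(A_1,\dots,A_n)$ gives each voter $i$ a non-empty approval set $A_i\subseteq A$. A ranking $r=(r_1,\dots,r_m)$ is a linear order of $A$, $r_{\le k}=\{r_1,\dots,r_k\}$, with $r_{\le k}=A$ for $k\ge m$. For nonempty $N'\subseteq N$ and $S\subseteq A$, $\mathrm{avg}(N',S)=\frac1{|N'|}\sum_{i\in N'}|A_i\cap S|$. The cohesiveness of $N'$ is $\lambda(N')=|\bigcap_{i\in N'}A_i|$; $N'$ is $(\alpha,\lambda)$-significant in $P$ if $|N'|=\lceil\alpha n\rceil$ and $\lambda(N')\ge\lambda$. For a weight vector $\mathbf w=(w_1,w_2,\dots)$ of nonnegative reals and $S\subseteq A$, let $w(S)=\sum_{i\in N}\sum_{j=1}^{|A_i\cap S|}w_j$. The rule $\mathbf w$-RAV builds $r$ iteratively from the empty ranking: at step $k\in[m]$ it appends an unranked alternative $a$ maximizing $w(r_{\le k-1}\cup\{a\})-w(r_{\le k-1})$ (ties broken arbitrarily). The $p$-geometric rule ($p>1$) is $\mathbf w$-RAV with $\mathbf w=(\frac1p,\frac1{p^2},\frac1{p^3},\dots)$.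 $e$ is Euler's number. *)

From Stdlib Require Import Reals List Arith QArith Qreals Permutation.
Import ListNotations.
Open Scope R_scope.

(* Voters are 0..n-1, alternatives are 0..m-1.
   A profile is a boolean approval relation [P i a] ("voter i approves a"). *)

Definition approved_count (P : nat -> nat -> bool) (i : nat) (S : list nat) : nat :=
  length (filter (fun a => P i a) S).

Definition wsum (w : nat -> R) (c : nat) : R :=
  fold_right Rplus 0 (map w (seq 1 c)).

Definition wscore (w : nat -> R) (P : nat -> nat -> bool) (n : nat) (S : list nat) : R :=
  fold_right Rplus 0 (map (fun i => wsum w (approved_count P i S)) (seq 0 n)).

(* r is a possible output of w-RAV on profile P (under some tie-breaking):
   r is a linear order of the m alternatives and at each step k (0-based)
   the chosen alternative r_k maximizes the marginal gain among the
   unranked alternatives. *)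
Definition is_wRAV_output (w : nat -> R) (P : nat -> nat -> bool) (n m : nat)
  (r : list nat) : Prop :=
  Permutation r (seq 0 m) /\
  forall k, (k < m)%nat -> forall a, (a < m)%nat -> ~ In a (firstn k r) ->
    wscore w P n (firstn k r ++ [a]) - wscore w P n (firstn k r)
    <= wscore w P n (firstn k r ++ [nth k r 0%nat]) - wscore w P n (firstn k r).

Definition geom_weights (p : R) : nat -> R := fun j => / (p ^ j).

Definition is_geometric_output (p : R) (P : nat -> nat -> bool) (n m : nat)
  (r : list nat) : Prop :=
  is_wRAV_output (geom_weights p) P n m r.

Definition valid_profile (P : nat -> nat -> bool) (n m : nat) : Prop :=
  forall i, (i < n)%nat -> exists a, (a < m)%nat /\ P i a = true.

Definition is_ceil (k : nat) (x : R) : Prop := INR k - 1 < x /\ x <= INR k.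

Definition cohesiveness (P : nat -> nat -> bool) (m : nat) (N' : list nat) : nat :=
  length (filter (fun a => forallb (fun i => P i a) N') (seq 0 m)).

Definition significant (P : nat -> nat -> bool) (n m : nat) (alpha : R)
  (lam : nat) (N' : list nat) : Prop :=
  NoDup N' /\ (forall i, In i N' -> (i < n)%nat) /\
  is_ceil (length N') (alpha * INR n) /\ (lam <= cohesiveness P m N')%nat.

Definition avg (P : nat -> nat -> bool) (N' : list nat) (S : list nat) : R :=
  INR (fold_right Nat.add 0%nat (map (fun i => approved_count P i S) N'))
  / INR (length N').

(** With [q = λ/(λ+1) = 1/p] the weights are [w_j = q^j], so each voter contributes
    at most [λ (1 - q^c) < λ] to the score and any prefix scores at most [nλ].  If
    [avg(N', r_≤k) < λ], then at every step [t < k] some member of [N'] has fewer than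
    [λ] ranked approved alternatives, so one of the [λ] alternatives approved by all of
    [N'] is still unranked.  Its marginal gain is [Σ_{i∈N'} q^(x_i+1)], which by
    convexity of [j ↦ q^j] is at least [|N'| q^(λ+1)] because the [x_i] average
    below [λ].  After [k] steps the score is thus at least
    [k |N'| q^(λ+1) ≥ e (λ+1) n q^(λ+1) = e q^λ · nλ > nλ], since
    [(1 + 1/λ)^λ < e]: a contradiction. *)

From Stdlib Require Import Reals List Arith QArith Qreals Permutation Lia Lra Classical.
Import ListNotations.
Open Scope R_scope.

Local Notation sumR f l := (fold_right Rplus 0 (map f l)).
Local Notation sumN f l := (fold_right Nat.add 0%nat (map f l)).

Lemma sumR_app (f : nat -> R) l1 l2 : sumR f (l1 ++ l2) = sumR f l1 + sumR f l2.
Proof. induction l1 as [|a l1 IH]; simpl; [lra | rewrite IH; lra]. Qed.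

Lemma sumR_sub (f g : nat -> R) l : sumR f l - sumR g l = sumR (fun x => f x - g x) l.
Proof. induction l; simpl; lra. Qed.

Lemma sumR_le (f g : nat -> R) l :
  (forall x, In x l -> f x <= g x) -> sumR f l <= sumR g l.
Proof.
  induction l as [|a l IH]; simpl; intros H; [lra|].
  assert (f a <= g a) by auto.
  assert (sumR f l <= sumR g l) by auto.
  lra.
Qed.

Lemma sumR_le_const (f : nat -> R) c l :
  (forall x, In x l -> f x <= c) -> sumR f l <= INR (length l) * c.
Proof.
  induction l as [|a l IH]; intros H; cbn [length map fold_right]; [simpl; lra|].
  assert (f a <= c) by (apply H; left; auto).
  assert (sumR f l <= INR (length l) * c) by (apply IH; intros; apply H; right; auto).
  rewrite S_INR. lra.
Qed.

Lemma sumR_affine (f : nat -> nat) a b l :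
  sumR (fun i => a + b * INR (f i)) l = a * INR (length l) + b * INR (sumN f l).
Proof.
  induction l as [|x l IH]; cbn [length map fold_right]; [simpl; lra|].
  rewrite IH, plus_INR, S_INR. ring.
Qed.

Section NonnegSums.

Variable f : nat -> R.
Hypothesis f_ge0 : forall x, 0 <= f x.

Lemma sumR_remove_le a l : sumR f (remove Nat.eq_dec a l) <= sumR f l.
Proof.
  induction l as [|x l IH]; simpl; [lra|].
  destruct (Nat.eq_dec a x); simpl; specialize (f_ge0 x); lra.
Qed.

Lemma sumR_remove_in a l : In a l -> f a + sumR f (remove Nat.eq_dec a l) <= sumR f l.
Proof.
  induction l as [|x l IH]; simpl; [tauto|]. intros Hin.
  destruct (Nat.eq_dec a x) as [<-|Hax]; simpl.
  - pose proof (sumR_remove_le a l). lra.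
  - destruct Hin as [->|Hin]; [congruence|]. specialize (IH Hin). lra.
Qed.

Lemma sumR_incl_le N l : NoDup N -> incl N l -> sumR f N <= sumR f l.
Proof.
  revert l; induction N as [|a N IH]; intros l HN Hincl; simpl.
  - clear Hincl. induction l as [|x l IHl]; simpl; [lra|]. specialize (f_ge0 x). lra.
  - inversion HN as [|? ? HaN HN']; subst.
    assert (Hrem : incl N (remove Nat.eq_dec a l)).
    { intros x Hx. apply in_in_remove; [intros ->; tauto | apply Hincl; right; auto]. }
    pose proof (sumR_remove_in a l (Hincl a (or_introl eq_refl))).
    specialize (IH _ HN' Hrem). lra.
Qed.

End NonnegSums.

Lemma sumN_le (f g : nat -> nat) l :
  (forall x, In x l -> f x <= g x)%nat -> (sumN f l <= sumN g l)%nat.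
Proof.
  induction l as [|a l IH]; simpl; intros H; [lia|].
  assert (f a <= g a)%nat by auto.
  assert (sumN f l <= sumN g l)%nat by auto.
  lia.
Qed.

Lemma sumN_succ (f : nat -> nat) l : sumN (fun x => S (f x)) l = (sumN f l + length l)%nat.
Proof. induction l as [|a l IH]; simpl; [lia | rewrite IH; lia]. Qed.

Lemma sumN_lt_mul_exists (f : nat -> nat) b l :
  (sumN f l < b * length l)%nat -> exists x, In x l /\ (f x < b)%nat.
Proof.
  induction l as [|a l IH]; simpl; intros H; [lia|].
  destruct (Nat.lt_ge_cases (f a) b) as [Ha|Ha]; [exists a; auto|].
  destruct IH as [x [Hx Hfx]]; [nia | exists x; auto].
Qed.

Lemma bernoulli_ineq (x : R) d : -1 <= x -> 1 + INR d * x <= (1 + x) ^ d.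
Proof.
  intros Hx. induction d as [|d IH]; [simpl; lra|].
  rewrite S_INR. cbn [pow].
  assert (0 <= INR d) by apply pos_INR.
  assert (0 <= INR d * (x * x)) by (apply Rmult_le_pos; nra).
  nra.
Qed.

(* Tangent-line inequality for the convex map [j ↦ q^j] at [j = b]; for [a < b] it
   comes from Bernoulli for [1/q] and [1/q - 1 >= 1 - q]. *)
Lemma pow_ge_tangent (q : R) (a b : nat) :
  0 < q -> q ^ b * (1 - (1 - q) * (INR a - INR b)) <= q ^ a.
Proof.
  intros Hq.
  destruct (Nat.le_gt_cases b a) as [Hba|Hab].
  - replace a with (b + (a - b))%nat by lia.
    rewrite plus_INR, pow_add.
    pose proof (bernoulli_ineq (q - 1) (a - b) ltac:(lra)) as Hb.
    replace (1 + (q - 1)) with q in Hb by ring.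
    assert (0 < q ^ b) by (apply pow_lt; auto).
    replace (INR b + INR (a - b) - INR b) with (INR (a - b)) by ring.
    nra.
  - set (d := (b - a)%nat).
    replace b with (a + d)%nat by (unfold d; lia).
    rewrite plus_INR, pow_add.
    replace (INR a - (INR a + INR d)) with (- INR d) by ring.
    pose proof (bernoulli_ineq (/ q - 1) d) as Hb.
    replace (1 + (/ q - 1)) with (/ q) in Hb by ring.
    rewrite pow_inv in Hb.
    assert (Hqd : 0 < q ^ d) by (apply pow_lt; auto).
    assert (Hqa : 0 < q ^ a) by (apply pow_lt; auto).
    assert (Hinv : 1 - q <= / q - 1).
    { apply (Rmult_le_reg_r q); [lra|]. rewrite !Rmult_minus_distr_r, Rinv_l by lra.
      pose proof (Rle_0_sqr (1 - q)). unfold Rsqr in *. lra. }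
    assert (0 <= INR d) by apply pos_INR.
    assert (Hd : q ^ d * (1 + INR d * (/ q - 1)) <= 1).
    { specialize (Hb ltac:(assert (0 < / q) by (apply Rinv_0_lt_compat; lra); lra)).
      apply (Rmult_le_compat_l (q ^ d)) in Hb; [|lra].
      rewrite Rinv_r in Hb by lra. exact Hb. }
    assert (q ^ d * (1 - (1 - q) * - INR d) <= 1).
    { eapply Rle_trans; [|exact Hd]. apply Rmult_le_compat_l; nra. }
    nra.
Qed.

Lemma sumR_pow_ge (q : R) (b : nat) (f : nat -> nat) l :
  0 < q <= 1 -> (sumN f l <= b * length l)%nat ->
  INR (length l) * q ^ b <= sumR (fun x => q ^ f x) l.
Proof.
  intros Hq Hf.
  eapply Rle_trans;
    [|apply sumR_le with (f := fun x => q ^ b * (1 + (1 - q) * INR b)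
                                    + - (q ^ b * (1 - q)) * INR (f x))].
  2:{ intros x _. eapply Rle_trans; [|apply (pow_ge_tangent q (f x) b); lra]. right; ring. }
  rewrite sumR_affine.
  apply le_INR in Hf. rewrite mult_INR in Hf.
  assert (0 <= q ^ b * (1 - q)) by (apply Rmult_le_pos; [apply pow_le|]; lra).
  nra.
Qed.

Lemma exp_pow (x : R) d : exp x ^ d = exp (INR d * x).
Proof.
  induction d as [|d IH]; [simpl; rewrite Rmult_0_l, exp_0; lra|].
  cbn [pow]. rewrite IH, S_INR, <- exp_plus. f_equal; ring.
Qed.

Lemma pow_lt_pow_l (a b : R) d : 0 <= a < b -> a ^ S d < b ^ S d.
Proof.
  intros Hab. cbn [pow].
  assert (a ^ d <= b ^ d) by (apply pow_incr; lra).
  assert (0 < b ^ d) by (apply pow_lt; lra).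
  nra.
Qed.

Lemma one_plus_inv_pow_lt_exp1 (l : nat) : (1 <= l)%nat -> (1 + / INR l) ^ l < exp 1.
Proof.
  intros Hl. destruct l as [|l]; [lia|].
  assert (Hinv : 0 < / INR (S l)) by (apply Rinv_0_lt_compat, lt_0_INR; lia).
  replace (exp 1) with (exp (/ INR (S l)) ^ S l).
  2:{ rewrite exp_pow. f_equal. field. apply not_0_INR. lia. }
  apply pow_lt_pow_l. split; [lra|]. apply exp_ineq1. lra.
Qed.

Lemma firstn_S_nth (l : list nat) t :
  (t < length l)%nat -> firstn (S t) l = firstn t l ++ [nth t l 0%nat].
Proof.
  revert t; induction l as [|a l IH]; intros t H; simpl in *; [lia|].
  destruct t; simpl; [auto | rewrite IH by lia; auto].
Qed.

Lemma approved_count_firstn_mono P i (l : list nat) t k :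
  (t <= k)%nat -> (approved_count P i (firstn t l) <= approved_count P i (firstn k l))%nat.
Proof.
  intros H. unfold approved_count.
  replace (firstn t l) with (firstn t (firstn k l))
    by (rewrite firstn_firstn; f_equal; lia).
  rewrite <- (firstn_skipn t (firstn k l)) at 2.
  rewrite filter_app, length_app. lia.
Qed.

Lemma approved_count_snoc P i A a :
  approved_count P i (A ++ [a]) = (approved_count P i A + if P i a then 1 else 0)%nat.
Proof.
  unfold approved_count. rewrite filter_app, length_app. simpl.
  destruct (P i a); simpl; lia.
Qed.

Lemma wsum_S w c : wsum w (S c) = wsum w c + w (S c).
Proof.
  unfold wsum. rewrite seq_S, sumR_app. simpl.
  replace (1 + c)%nat with (S c) by lia. lra.
Qed.

Lemma wscore_nil w P n : wscore w P n [] = 0.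
Proof.
  unfold wscore. induction (seq 0 n) as [|a l IH]; simpl; [lra|].
  unfold wsum at 1. simpl. lra.
Qed.

Lemma wscore_snoc_sub w P n A a :
  wscore w P n (A ++ [a]) - wscore w P n A =
  sumR (fun i => if P i a then w (S (approved_count P i A)) else 0) (seq 0 n).
Proof.
  unfold wscore. rewrite sumR_sub. f_equal. apply map_ext. intro i.
  rewrite approved_count_snoc. destruct (P i a).
  - rewrite Nat.add_1_r, wsum_S. ring.
  - rewrite Nat.add_0_r. ring.
Qed.

Lemma wscore_gain_ge_group w P n N' A c :
  (forall j, 0 <= w j) -> NoDup N' -> (forall i, In i N' -> (i < n)%nat) ->
  (forall i, In i N' -> P i c = true) ->
  sumR (fun i => w (S (approved_count P i A))) N' <= wscore w P n (A ++ [c]) - wscore w P n A.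
Proof.
  intros Hw HN' HN'n Hc.
  rewrite wscore_snoc_sub.
  eapply Rle_trans; [|apply sumR_incl_le; [|exact HN'|]].
  - right. f_equal. apply map_ext_in. intros i Hi. now rewrite (Hc i Hi).
  - intros i. destruct (P i c); [apply Hw | lra].
  - intros i Hi. apply in_seq. specialize (HN'n i Hi). lia.
Qed.

Lemma exists_unranked_common_approval P m N' A i lam :
  (lam <= cohesiveness P m N')%nat -> In i N' -> (approved_count P i A < lam)%nat ->
  exists c, (c < m)%nat /\ (forall j, In j N' -> P j c = true) /\ ~ In c A.
Proof.
  intros Hcoh Hi Hcount.
  set (C := filter (fun a => forallb (fun j => P j a) N') (seq 0 m)).
  assert (HC : ~ incl C (filter (P i) A)).
  { intros Hincl.
    pose proof (NoDup_incl_length (NoDup_filter _ (seq_NoDup m 0)) Hincl).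
    unfold cohesiveness in Hcoh. unfold approved_count in Hcount.
    change (fun a => P i a) with (P i) in Hcount. unfold C in *. lia. }
  apply not_all_ex_not in HC as [c Hc].
  apply imply_to_and in Hc as [HcC Hcn].
  apply filter_In in HcC as [Hcm Hall].
  apply in_seq in Hcm. rewrite forallb_forall in Hall.
  exists c. repeat split; [lia | exact Hall |].
  intros HcA. apply Hcn, filter_In. auto.
Qed.

Lemma telescope_lower_bound (F : nat -> R) (g : R) k :
  0 <= F 0%nat -> (forall t, (t < k)%nat -> g <= F (S t) - F t) -> INR k * g <= F k.
Proof.
  intros H0 Hstep. induction k as [|k IH]; [simpl; lra|].
  rewrite S_INR.
  specialize (IH (fun t Ht => Hstep t ltac:(lia))).
  specialize (Hstep k ltac:(lia)). lra.
Qed.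

Section Geometric.

Variable lam : nat.
Hypothesis lam_ge1 : (1 <= lam)%nat.

Local Notation p := ((INR lam + 1) / INR lam).
Local Notation q := (INR lam / (INR lam + 1)).

Let lam_ge1_R : 1 <= INR lam.
Proof. apply (le_INR 1) in lam_ge1. simpl in lam_ge1. lra. Qed.

Let q_pos : 0 < q.
Proof. apply Rdiv_lt_0_compat; lra. Qed.

Let q_le1 : q <= 1.
Proof.
  assert (0 < / (INR lam + 1)) by (apply Rinv_0_lt_compat; lra).
  replace (INR lam / (INR lam + 1)) with (1 - / (INR lam + 1)) by (field; lra).
  lra.
Qed.

Lemma geom_weights_ratio j : geom_weights p j = q ^ j.
Proof. unfold geom_weights. rewrite <- pow_inv. f_equal. field. lra. Qed.

Lemma wsum_geom c : wsum (geom_weights p) c = INR lam * (1 - q ^ c).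
Proof.
  induction c as [|c IH]; [unfold wsum; simpl; ring|].
  rewrite wsum_S, IH, geom_weights_ratio. cbn [pow]. field. lra.
Qed.

Lemma wscore_geom_le P n A : wscore (geom_weights p) P n A <= INR n * INR lam.
Proof.
  unfold wscore. rewrite <- (length_seq n 0) at 2. apply sumR_le_const.
  intros i _. rewrite wsum_geom.
  assert (0 <= q ^ approved_count P i A) by (apply pow_le; lra).
  nra.
Qed.

Lemma geometric_gain_ge P n m r N' t :
  is_geometric_output p P n m r -> NoDup N' -> (forall i, In i N' -> (i < n)%nat) ->
  (lam <= cohesiveness P m N')%nat ->
  (sumN (fun i => approved_count P i (firstn t r)) N' < lam * length N')%nat ->
  INR (length N') * q ^ S lam <=
  wscore (geom_weights p) P n (firstn (S t) r) - wscore (geom_weights p) P n (firstn t r).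
Proof.
  intros [Hperm Hrav] HN' HN'n Hcoh Htotal.
  destruct (sumN_lt_mul_exists _ _ _ Htotal) as [i [Hi Hcount]].
  destruct (exists_unranked_common_approval P m N' (firstn t r) i lam Hcoh Hi Hcount)
    as [c [Hcm [Hc Hcr]]].
  assert (Hlen : length r = m) by (rewrite (Permutation_length Hperm), length_seq; auto).
  assert (Htm : (t < m)%nat).
  { destruct (Nat.lt_ge_cases t m) as [|Hge]; [auto|]. exfalso.
    rewrite firstn_all2 in Hcr by lia. apply Hcr.
    apply Permutation_in with (seq 0 m); [symmetry; auto | apply in_seq; lia]. }
  rewrite firstn_S_nth by lia.
  eapply Rle_trans; [|exact (Hrav t Htm c Hcm Hcr)].
  assert (Hw : forall j, 0 <= geom_weights p j)
    by (intros j; rewrite geom_weights_ratio; apply pow_le; lra).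
  eapply Rle_trans; [|exact (wscore_gain_ge_group _ P n N' _ c Hw HN' HN'n Hc)].
  rewrite (map_ext _ (fun i => q ^ S (approved_count P i (firstn t r))))
    by (intros j; apply geom_weights_ratio).
  apply sumR_pow_ge; [lra|].
  rewrite sumN_succ. lia.
Qed.

Lemma exp1_mul_pow_ratio_gt1 : 1 < exp 1 * q ^ lam.
Proof.
  pose proof (one_plus_inv_pow_lt_exp1 lam lam_ge1) as He.
  assert (Hqp : q ^ lam * (1 + / INR lam) ^ lam = 1).
  { rewrite <- Rpow_mult_distr. replace (q * (1 + / INR lam)) with 1 by (field; lra).
    apply pow1. }
  assert (0 < q ^ lam) by (apply pow_lt; auto).
  nra.
Qed.

Lemma score_cap_lt_guaranteed_gain (alpha : R) n s k :
  0 < alpha -> (1 <= n)%nat -> alpha * INR n <= INR s ->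
  exp 1 * (INR lam + 1) / alpha <= INR k ->
  INR n * INR lam < INR k * (INR s * q ^ S lam).
Proof.
  intros Halpha Hn Hs Hk.
  assert (Hn' : 1 <= INR n) by (apply (le_INR 1) in Hn; simpl in Hn; lra).
  assert (Hks : exp 1 * (INR lam + 1) * INR n <= INR k * INR s).
  { replace (exp 1 * (INR lam + 1) * INR n)
      with (exp 1 * (INR lam + 1) / alpha * (alpha * INR n)) by (field; lra).
    apply Rmult_le_compat; auto; [|nra].
    apply Rmult_le_pos; [|left; apply Rinv_0_lt_compat; lra].
    pose proof (exp_pos 1). nra. }
  assert (0 < q ^ S lam) by (apply pow_lt; auto).
  assert (Hgain : INR n * INR lam < INR n * INR lam * (exp 1 * q ^ lam)).
  { rewrite <- (Rmult_1_r (INR n * INR lam)) at 1.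
    apply Rmult_lt_compat_l; [nra | apply exp1_mul_pow_ratio_gt1]. }
  replace (INR n * INR lam * (exp 1 * q ^ lam))
    with (exp 1 * (INR lam + 1) * INR n * q ^ S lam) in Hgain
    by (cbn [pow]; field; lra).
  rewrite <- Rmult_assoc.
  eapply Rlt_le_trans; [exact Hgain|]. apply Rmult_le_compat_r; lra.
Qed.

End Geometric.

Theorem corollary1 (lam : nat) (hlam : (1 <= lam)%nat)
  (alpha : R) (halpha_rat : exists q : Q, Q2R q = alpha)
  (halpha : 0 < alpha <= 1)
  (n m : nat) (hn : (1 <= n)%nat) (P : nat -> nat -> bool)
  (hP : valid_profile P n m)
  (r : list nat)
  (hr : is_geometric_output ((INR lam + 1) / INR lam) P n m r)
  (N' : list nat) (hN' : significant P n m alpha lam N')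
  (k : nat) (hk : is_ceil k (exp 1 * (INR lam + 1) / alpha)) :
  avg P N' (firstn k r) >= INR lam.
Proof.
  destruct hN' as [HN' [HN'n [[_ Hs] Hcoh]]]. destruct hk as [_ Hk].
  set (s := length N') in *.
  set (total t := sumN (fun i => approved_count P i (firstn t r)) N').
  set (score t := wscore (geom_weights ((INR lam + 1) / INR lam)) P n (firstn t r)).
  assert (Hs0 : 0 < INR s) by (assert (1 <= INR n) by (apply (le_INR 1) in hn; auto); nra).
  unfold avg. fold s. change (INR (total k) / INR s >= INR lam). apply Rle_ge.
  destruct (Nat.le_gt_cases (lam * s) (total k)) as [Hbig|Hsmall].
  - apply le_INR in Hbig. rewrite mult_INR in Hbig.
    apply (Rmult_le_reg_r (INR s)); [lra|]. unfold Rdiv.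
    rewrite Rmult_assoc, Rinv_l, Rmult_1_r by lra. exact Hbig.
  - exfalso.
    assert (Hlow : INR k * (INR s * (INR lam / (INR lam + 1)) ^ S lam) <= score k).
    { apply telescope_lower_bound; [unfold score; rewrite wscore_nil; lra|].
      intros t Ht. apply (geometric_gain_ge lam hlam P n m); auto.
      eapply Nat.le_lt_trans; [|exact Hsmall].
      apply sumN_le. intros i _. apply approved_count_firstn_mono. lia. }
    pose proof (wscore_geom_le lam hlam P n (firstn k r)).
    pose proof (score_cap_lt_guaranteed_gain lam hlam alpha n s k ltac:(lra) hn Hs Hk).
    unfold score in Hlow. lra.
Qed.
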